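(* Let $\sigma$ be a term ordering on $\mathbb{T}^n$. Let $T=(t_1,\dots,t_r)$ be an interreduced $\sigma$-ordered tuple of elements of $\mathbb{T}^n$, and let $T'$ be a set of elements of $\mathbb{T}^n$. Assume there exist $t'\in T'$ and an index $k\in\{1,\dots,r\}$ such that $t_1,\dots,t_{k-1}\in T'$, $t_k>_\sigma t'$, and $t'$ is not divisible by any $t_i$ in $T$. Then $O_\sigma(T')\prec_\sigma T$, and $T$ is not a proper prefix of $O_\sigma(T')$.
   Context: $\mathbb{T}^n$ is the monoid of power-products in $x_1,\dots,x_n$. A tuple $(t_1,\dots,t_r)$ of distinct power-products is $\sigma$-ordered if $t_1<_\sigma\cdots<_\sigma t_r$. The interreduction of a set $S$ of power-products is the set of elements of $S$ not divisible by any other element of $S$; $S$ (or a tuple) is interreduced if it equals its interreduction. For a set $T'$ of power-products, $O_\sigma(T')$ is the $\sigma$-ordered tuple of the interreduction of $T'$. For $\sigma$-ordered tuples $T=(t_1,\dots,t_r)$ and $T'=(t'_1,\dots,t'_{r'})$, $T'\prec_\sigma T$ means either $T$ is a proper prefix of $T'$ (i.e. $r<r'$ and $t_i=t'_i$ for $i\le r$), or there is $k\le\min(r,r')$ with $t_i=t'_i$ for $i<k$ and $t'_k<_\sigma t_k$. *)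

From mathcomp Require Import all_boot.
Set Implicit Arguments. Unset Strict Implicit. Unset Printing Implicit Defensive.

(* Power-products in x_1..x_n: exponent vectors. *)
Definition mon (n : nat) := {ffun 'I_n -> nat}.

Definition mone (n : nat) : mon n := [ffun _ => 0%N].
Definition mmul (n : nat) (a b : mon n) : mon n := [ffun i => (a i + b i)%N].
Definition mdiv (n : nat) (a b : mon n) : Prop := forall i, (a i <= b i)%N.

Definition term_ordering (n : nat) (le : mon n -> mon n -> Prop) : Prop :=
  [/\ (forall a, le a a),
      (forall a b, le a b -> le b a -> a = b),
      (forall a b c, le a b -> le b c -> le a c),
      (forall a b, le a b \/ le b a)
    & (forall a b c, le a b -> le (mmul a c) (mmul b c)) /\ (forall a, le (mone n) a)].

Definition tlt (n : nat) (le : mon n -> mon n -> Prop) (a b : mon n) : Prop :=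
  le a b /\ a <> b.

Definition sigma_ordered (n : nat) (le : mon n -> mon n -> Prop) (T : seq (mon n)) :=
  forall i, (i.+1 < size T)%N -> tlt le (nth (mone n) T i) (nth (mone n) T i.+1).

Definition interreduced_seq (n : nat) (T : seq (mon n)) : Prop :=
  forall i j, (i < size T)%N -> (j < size T)%N -> i <> j ->
    ~ mdiv (nth (mone n) T i) (nth (mone n) T j).

Definition interreduction (n : nat) (S : mon n -> Prop) : mon n -> Prop :=
  fun t => S t /\ forall s, S s -> s <> t -> ~ mdiv s t.

(* O_sigma(S) = U : U is the sigma-ordered tuple whose elements are exactly
   those of the interreduction of S (this determines U uniquely). *)
Definition is_O (n : nat) (le : mon n -> mon n -> Prop) (S : mon n -> Prop)
  (U : seq (mon n)) : Prop :=
  sigma_ordered le U /\ forall t, t \in U <-> interreduction S t.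

Definition proper_prefix (n : nat) (T T' : seq (mon n)) : Prop :=
  (size T < size T')%N /\
  forall i, (i < size T)%N -> nth (mone n) T' i = nth (mone n) T i.

Definition prec (n : nat) (le : mon n -> mon n -> Prop) (T' T : seq (mon n)) : Prop :=
  proper_prefix T T' \/
  exists k, [/\ (k < minn (size T) (size T'))%N,
     (forall i, (i < k)%N -> nth (mone n) T' i = nth (mone n) T i)
   & tlt le (nth (mone n) T' k) (nth (mone n) T k)].

(** Let [U = O_sigma(T')] and let [j <= k] be the first index at which [U] and
    [T] disagree, or [k] if they agree up to [k].  Every element of [T'] is
    divisible by a minimal element of [T'], i.e. by an element [d] of [U]; we
    pick [d] dividing [t_j] if [j < k], and dividing [t'] if [j = k].  In both
    cases [d <=_sigma t_j] and [d] is none of [t_1, ..., t_(j-1)] (these are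
    pairwise non-divisible, and do not divide [t']), so [d] sits in [U] at a
    position [>= j]; hence [U] has a [j]-th entry and [u_j <=_sigma d].  If
    [j < k] then [u_j <> t_j]; if [j = k] then [d <=_sigma t' <_sigma t_k].
    Either way [u_j <_sigma t_j], which gives both conclusions. *)

From mathcomp Require Import all_boot.
From Stdlib Require Import Classical.
Set Implicit Arguments. Unset Strict Implicit.

Definition mdeg (n : nat) (a : mon n) : nat := (\sum_(i < n) a i)%N.

Section Divisibility.
Variable n : nat.

Lemma mdiv_trans (a b c : mon n) : mdiv a b -> mdiv b c -> mdiv a c.
Proof. by move=> hab hbc i; apply: leq_trans (hab i) (hbc i). Qed.

Lemma mdiv_mdeg_lt (a b : mon n) : mdiv a b -> a <> b -> (mdeg a < mdeg b)%N.
Proof.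
move=> hab neq_ab.
have [i lt_abi] : exists i, (a i < b i)%N.
  apply: NNPP => no_lt; apply: neq_ab; apply/ffunP => i; apply/eqP.
  by rewrite eqn_leq hab leqNgt; apply/negP => lt_abi; apply: no_lt; exists i.
rewrite /mdeg (bigD1 i) //= [X in (_ < X)%N](bigD1 i) //= -addSn.
by rewrite leq_add //; apply: leq_sum => j _; apply: hab.
Qed.

Lemma interreduction_mdiv (S : mon n -> Prop) (x : mon n) :
  S x -> exists2 d, interreduction S d & mdiv d x.
Proof.
move: {2}(mdeg x) (erefl (mdeg x)) => m; elim/ltn_ind: m x => m IHm x degx Sx.
case: (classic (exists s, [/\ S s, s <> x & mdiv s x])) => [[s [Ss neq_sx dvd_sx]]|].
  have lt_sx : (mdeg s < m)%N by rewrite -degx; apply: mdiv_mdeg_lt.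
  have [d red_d dvd_ds] := IHm _ lt_sx s erefl Ss.
  by exists d => //; apply: mdiv_trans dvd_sx.
move=> no_div; exists x => //; split=> // s Ss neq_sx dvd_sx.
by apply: no_div; exists s.
Qed.

Lemma interreduced_nth_witness (S : mon n -> Prop) (T : seq (mon n)) j :
  interreduced_seq T -> (j < size T)%N -> S (nth (mone n) T j) ->
  exists2 d, interreduction S d &
    (forall q, (q < size T)%N -> q <> j -> nth (mone n) T q <> d) /\
    mdiv d (nth (mone n) T j).
Proof.
move=> redT ltjT /interreduction_mdiv [d red_d dvd_d]; exists d => //.
by split=> // q ltqT neq_qj eq_qd; apply: redT ltqT ltjT neq_qj _; rewrite eq_qd.
Qed.

Lemma nondivisible_witness (S : mon n -> Prop) (T : seq (mon n)) t :
  S t -> (forall i, (i < size T)%N -> ~ mdiv (nth (mone n) T i) t) ->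
  exists2 d, interreduction S d &
    (forall q, (q < size T)%N -> nth (mone n) T q <> d) /\ mdiv d t.
Proof.
move=> /interreduction_mdiv [d red_d dvd_d] t_red; exists d => //.
by split=> // q ltqT eq_qd; apply: t_red ltqT _; rewrite eq_qd.
Qed.

End Divisibility.

Section TermOrdering.
Variables (n : nat) (le : mon n -> mon n -> Prop).
Hypothesis le_term : term_ordering le.

Lemma term_le_refl (a : mon n) : le a a.
Proof. by case: le_term. Qed.

Lemma term_le_anti (a b : mon n) : le a b -> le b a -> a = b.
Proof. by case: le_term => _ anti _ _ _; apply: anti. Qed.

Lemma term_le_trans (a b c : mon n) : le a b -> le b c -> le a c.
Proof. by case: le_term => _ _ trans _ _; apply: trans. Qed.

Lemma le_le_neq_tlt (a d b : mon n) :
  le a d -> le d b -> a <> b \/ d <> b -> tlt le a b.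
Proof.
move=> le_ad le_db neq; split; first exact: term_le_trans le_db.
move=> eq_ab; rewrite eq_ab in le_ad neq.
by case: neq => //; apply; apply: term_le_anti le_db le_ad.
Qed.

(* [b = a * (b / a)] and [1 <=_sigma b / a]. *)
Lemma mdiv_le (a b : mon n) : mdiv a b -> le a b.
Proof.
case: le_term => _ _ _ _ [le_mmul le_mone] dvd_ab.
have := le_mmul _ _ a (le_mone [ffun i => b i - a i]).
have -> : mmul (mone n) a = a by apply/ffunP => i; rewrite !ffunE.
by have -> : mmul [ffun i => b i - a i] a = b by apply/ffunP => i; rewrite !ffunE subnK.
Qed.

Lemma sigma_ordered_nth_le (U : seq (mon n)) i j :
  sigma_ordered le U -> (i <= j)%N -> (j < size U)%N ->
  le (nth (mone n) U i) (nth (mone n) U j).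
Proof.
move=> sortU; elim: j => [|j IHj]; first by rewrite leqn0 => /eqP -> _; exact: term_le_refl.
rewrite leq_eqVlt => /orP [/eqP -> _|lt_ij ltjU]; first exact: term_le_refl.
apply: term_le_trans (IHj lt_ij (ltnW ltjU)) _.
exact: (sortU j ltjU).1.
Qed.

Lemma sigma_ordered_nth_le_mem (U : seq (mon n)) j d :
  sigma_ordered le U -> d \in U -> (forall q, (q < j)%N -> nth (mone n) U q <> d) ->
  (j < size U)%N /\ le (nth (mone n) U j) d.
Proof.
move=> sortU dU not_prefix.
have le_j_idx : (j <= index d U)%N.
  by rewrite leqNgt; apply/negP => /not_prefix; rewrite nth_index.
have lt_idx : (index d U < size U)%N by rewrite index_mem.
split; first exact: leq_ltn_trans lt_idx.
by rewrite -[X in le _ X](nth_index (mone n) dU); apply: sigma_ordered_nth_le.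
Qed.

Lemma prec_of_interreduction_witness (S : mon n -> Prop) (U T : seq (mon n)) j d :
  is_O le S U -> (j < size T)%N ->
  (forall i, (i < j)%N -> nth (mone n) U i = nth (mone n) T i) ->
  interreduction S d -> (forall q, (q < j)%N -> nth (mone n) T q <> d) ->
  le d (nth (mone n) T j) ->
  nth (mone n) U j <> nth (mone n) T j \/ d <> nth (mone n) T j ->
  prec le U T /\ ~ proper_prefix T U.
Proof.
move=> [sortU memU] ltjT agree red_d avoid le_dTj mismatch_j.
have [ltjU le_Ujd] : (j < size U)%N /\ le (nth (mone n) U j) d.
  apply: sigma_ordered_nth_le_mem sortU (proj2 (memU d) red_d) _.
  by move=> q ltqj; rewrite agree //; apply: avoid.
have ltUT := le_le_neq_tlt le_Ujd le_dTj mismatch_j.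
split; first by right; exists j; split; rewrite ?leq_min ?ltjT.
move=> [_ prefixTU]; apply: ltUT.2; exact: prefixTU.
Qed.

End TermOrdering.

Lemma exists_first_mismatch (T : eqType) (x0 : T) (s1 s2 : seq T) k :
  exists j, [/\ (j <= k)%N,
    (forall i, (i < j)%N -> nth x0 s1 i = nth x0 s2 i)
  & (j < k)%N -> nth x0 s1 j <> nth x0 s2 j].
Proof.
have hk : exists j, (j == k) || (nth x0 s1 j != nth x0 s2 j) by exists k; rewrite eqxx.
case: (ex_minnP hk) => j jP j_min; exists j; split.
- by apply: j_min; rewrite eqxx.
- move=> i lt_ij; apply/eqP; apply: contraTT lt_ij => neq_i.
  by rewrite -leqNgt; apply: j_min; rewrite neq_i orbT.
- by move: jP => /orP [/eqP -> |/eqP //]; rewrite ltnn.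
Qed.

Theorem lemma4p10 (n : nat) (le : mon n -> mon n -> Prop)
  (T : seq (mon n)) (T' : mon n -> Prop) :
  term_ordering le ->
  sigma_ordered le T ->
  interreduced_seq T ->
  (exists (t' : mon n) (k : nat),
      [/\ T' t', (k < size T)%N,
          (forall i, (i < k)%N -> T' (nth (mone n) T i)),
          tlt le t' (nth (mone n) T k)
        & (forall i, (i < size T)%N -> ~ mdiv (nth (mone n) T i) t')]) ->
  forall U : seq (mon n), is_O le T' U ->
    prec le U T /\ ~ proper_prefix T U.
Proof.
move=> le_term _ redT [t' [k [T't ltkT prefixT' lt_t'k t'_red]]] U U_O.
have [j [le_jk agree mismatch]] := exists_first_mismatch (mone n) U T k.
have ltjT : (j < size T)%N := leq_ltn_trans le_jk ltkT.
case: (ltnP j k) => [ltjk|le_kj].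
- have [d red_d [avoid dvd_dTj]] := interreduced_nth_witness redT ltjT (prefixT' j ltjk).
  apply: (prec_of_interreduction_witness le_term U_O ltjT agree red_d).
  + move=> q ltqj; apply: avoid; first exact: ltn_trans ltqj ltjT.
    by move=> eq_qj; rewrite eq_qj ltnn in ltqj.
  + exact: mdiv_le.
  + by left; apply: mismatch.
- have eq_jk : j = k by apply/eqP; rewrite eqn_leq le_jk.
  subst j; have [d red_d [avoid dvd_dt']] := nondivisible_witness T't t'_red.
  have lt_dTk := le_le_neq_tlt le_term (mdiv_le le_term dvd_dt') lt_t'k.1
                   (or_intror lt_t'k.2).
  apply: (prec_of_interreduction_witness le_term U_O ltkT agree red_d _ lt_dTk.1).
  + by move=> q ltqk; apply: avoid; apply: ltn_trans ltqk ltkT.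
  + by right; apply: lt_dTk.2.
Qed.
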